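(* Let $A:\mathcal U$ with $\mathrm{isProp}(A)$, let $\mathcal B$ be a typoid, and let $f:A\to B$. Then $f$ is a typoid function from the truncated typoid $\mathcal A^t$ to $\mathcal B$.
   Context: We work in intensional Martin-Löf type theory with a universe $\mathcal U$ (univalent type theory as in the HoTT book). A (2-)typoid $\mathcal A=(A,\simeq_{\mathcal A},\mathrm{eqv}_{\mathcal A},\ast_{\mathcal A},{}^{-1_{\mathcal A}},\cong_{\mathcal A})$ consists of the following data: - a type $A:\mathcal U$; - a type family $\simeq_{\mathcal A}:A\to A\to\mathcal U$; - a dependent function $\mathrm{eqv}:\prod_{x:A}x\simeq x$, whose values are written $\mathrm{eqv}_x$; - a composition $\ast:\prod_{x,y,z:A}(x\simeq y)\to(y\simeq z)\to(x\simeq z)$, written infix; - an inversion ${}^{-1}:\prod_{x,y:A}(x\simeq y)\to(y\simeq x)$; - a family $\cong:\prod_{x,y:A}(x\simeq y)\to(x\simeq y)\to\mathcal U$ which, for each $x,y$, is an equivalence relation on $x\simeq y$, with reflexivity, symmetry and transitivity witnessed by terms. These are required to satisfy the following. For all $x,y,z,w:A$, $e,e_1,d_1:x\simeq y$, $e_2,d_2:y\simeq z$ and $e_3:z\simeq w$, there are terms of the types: - (Typ1) $\mathrm{eqv}_x\ast e\cong e$ and $e\ast\mathrm{eqv}_y\cong e$; - (Typ2) $e\ast e^{-1}\cong\mathrm{eqv}_x$ and $e^{-1}\ast e\cong\mathrm{eqv}_y$; - (Typ3) $(e_1\ast e_2)\ast e_3\cong e_1\ast(e_2\ast e_3)$;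 - (Typ4) $(e_1\cong d_1)\to(e_2\cong d_2)\to(e_1\ast e_2\cong d_1\ast d_2)$. Subscripts are omitted when clear. If $\mathcal A,\mathcal B$ are typoids, a function $f:A\to B$ is a typoid function from $\mathcal A$ to $\mathcal B$ if there are dependent functions - $\Phi_f:\prod_{x,y:A}(x\simeq_{\mathcal A}y)\to(f(x)\simeq_{\mathcal B}f(y))$, called a 1-associate of $f$, and - $\Phi^2_f:\prod_{x,y:A}\prod_{e,d:x\simeq_{\mathcal A}y}(e\cong_{\mathcal A}d)\to(\Phi_f(x,y,e)\cong_{\mathcal B}\Phi_f(x,y,d))$, called a 2-associate with respect to $\Phi_f$, such that for all $x,y,z:A$, $e_1:x\simeq_{\mathcal A}y$ and $e_2:y\simeq_{\mathcal A}z$ there are terms of the types: - (i) $\Phi_f(x,x,\mathrm{eqv}_x)\cong_{\mathcal B}\mathrm{eqv}_{f(x)}$; - (ii) $\Phi_f(x,z,e_1\ast_{\mathcal A}e_2)\cong_{\mathcal B}\Phi_f(x,y,e_1)\ast_{\mathcal B}\Phi_f(y,z,e_2)$. The function $f$ is strict with respect to $\Phi_f$ if $\Phi_f(x,x,\mathrm{eqv}_x)\equiv\mathrm{eqv}_{f(x)}$ holds judgmentally for every $x:A$. Truncated typoid. For $A:\mathcal U$, let $\mathbf 1$ be the unit type with canonical element $0_{\mathbf 1}$. The truncated typoid $\mathcal A^t$ has underlying type $A$ and, for all $x,y,z:A$, $e,e':x\simeq y$ and $d:y\simeq z$: - $x\simeq_{\mathcal A^t}y:\equiv\mathbf 1$;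 - $\mathrm{eqv}_x:\equiv0_{\mathbf 1}$, $e\ast d:\equiv0_{\mathbf 1}$ and $e^{-1}:\equiv0_{\mathbf 1}$; - $e\cong_{\mathcal A^t}e':\equiv(e=_{\mathbf 1}e')$. This $\mathcal A^t$ is a typoid. $\mathrm{isProp}(A):\equiv\prod_{x,y:A}(x=_Ay)$. *)

(* plain Rocq types play the role of the universe U;
   Type-valued families are proof-relevant, as in MLTT. *)

Definition isProp (A : Type) : Type := forall x y : A, x = y.

Record Typoid := mkTypoid {
  carrier : Type;
  teq : carrier -> carrier -> Type;
  eqv : forall x : carrier, teq x x;
  comp : forall x y z : carrier, teq x y -> teq y z -> teq x z;
  inv : forall x y : carrier, teq x y -> teq y x;
  cong : forall x y : carrier, teq x y -> teq x y -> Type;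
  cong_refl : forall x y (e : teq x y), cong x y e e;
  cong_sym : forall x y (e d : teq x y), cong x y e d -> cong x y d e;
  cong_trans : forall x y (e d c : teq x y),
      cong x y e d -> cong x y d c -> cong x y e c;
  typ1l : forall x y (e : teq x y), cong x y (comp x x y (eqv x) e) e;
  typ1r : forall x y (e : teq x y), cong x y (comp x y y e (eqv y)) e;
  typ2l : forall x y (e : teq x y), cong x x (comp x y x e (inv x y e)) (eqv x);
  typ2r : forall x y (e : teq x y), cong y y (comp y x y (inv x y e) e) (eqv y);
  typ3 : forall x y z w (e1 : teq x y) (e2 : teq y z) (e3 : teq z w),
      cong x w (comp x z w (comp x y z e1 e2) e3)
               (comp x y w e1 (comp y z w e2 e3));
  typ4 : forall x y z (e1 d1 : teq x y) (e2 d2 : teq y z),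
      cong x y e1 d1 -> cong y z e2 d2 ->
      cong x z (comp x y z e1 e2) (comp x y z d1 d2)
}.

Record IsTypoidFunction (TA TB : Typoid) (f : carrier TA -> carrier TB) := {
  Phi : forall x y : carrier TA, teq TA x y -> teq TB (f x) (f y);
  Phi2 : forall (x y : carrier TA) (e d : teq TA x y),
      cong TA x y e d -> cong TB (f x) (f y) (Phi x y e) (Phi x y d);
  tf_eqv : forall x : carrier TA,
      cong TB (f x) (f x) (Phi x x (eqv TA x)) (eqv TB (f x));
  tf_comp : forall (x y z : carrier TA) (e1 : teq TA x y) (e2 : teq TA y z),
      cong TB (f x) (f z) (Phi x z (comp TA x y z e1 e2))
           (comp TB (f x) (f y) (f z) (Phi x y e1) (Phi y z e2))
}.

Definition truncTypoid (A : Type) : Typoid.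
Proof.
  refine (@mkTypoid A (fun _ _ => unit) (fun _ => tt)
            (fun _ _ _ _ _ => tt) (fun _ _ _ => tt)
            (fun _ _ e e' => e = e') _ _ _ _ _ _ _ _ _);
  intros; repeat match goal with u : unit |- _ => destruct u end;
  try reflexivity; try assumption; try (symmetry; assumption);
  try (etransitivity; eassumption).
Defined.

(* A proposition is a set: any two paths between the same points are equal.
   So mapping every pair x, y of A to the transport of [eqv] along the path
   [HA x y] is automatically coherent, and a path-induction argument shows
   that transporting along a composite path is composition up to [cong]. *)


Lemma isProp_isSet {A : Type} (HA : isProp A) {x y : A} (p q : x = y) : p = q.
Proof.
  assert (canonical : forall (u v : A) (r : u = v),
             eq_trans (eq_sym (HA x u)) (HA x v) = r).
  { intros u v []; destruct (HA x u); reflexivity. }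
  now rewrite <- (canonical x y p), <- (canonical x y q).
Qed.

Definition path_teq {A : Type} (B : Typoid) (f : A -> carrier B) {x y : A}
    (p : x = y) : teq B (f x) (f y) :=
  match p in _ = y' return teq B (f x) (f y') with
  | eq_refl => eqv B (f x)
  end.

Lemma path_teq_trans {A : Type} (B : Typoid) (f : A -> carrier B)
    (x y z : A) (p : x = y) (q : y = z) :
  cong B (f x) (f z) (path_teq B f (eq_trans p q))
       (comp B (f x) (f y) (f z) (path_teq B f p) (path_teq B f q)).
Proof. destruct q, p; simpl; apply cong_sym, typ1l. Qed.

Theorem mainTheorem19 (A : Type) (HA : isProp A) (B : Typoid)
    (f : A -> carrier B) :
  IsTypoidFunction (truncTypoid A) B f.
Proof.
  unshelve refine (Build_IsTypoidFunction (truncTypoid A) B f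
                     (fun x y _ => path_teq B f (HA x y)) _ _ _).
  - intros; apply cong_refl.
  - intros x; simpl.
    rewrite (isProp_isSet HA (HA x x) eq_refl); apply cong_refl.
  - intros x y z _ _; simpl.
    rewrite (isProp_isSet HA (HA x z) (eq_trans (HA x y) (HA y z))).
    apply path_teq_trans.
Qed.
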